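(* (Perfect soundness of the Five Cells protocol.) Let a Five Cells puzzle on an $m\times n$ grid be given. If the prover $P$ does not know a solution of the puzzle, then in the Five Cells zero-knowledge protocol described in the context the verifier $V$ always rejects; equivalently, if $V$ accepts, then the cards printed during the protocol determine a partition of the grid into pentominoes which is a valid solution of the puzzle.
   Context: Five Cells puzzle: an $m\times n$ rectangular grid in which some cells contain a number. A solution is a partition of the grid into pentominoes (connected sets of 5 cells; a pentomino obtained from another by rotation or reflection counts as a different type, giving 63 types) such that for every numbered cell, the number equals the number of that cell's four edges which are borders of pentominoes (edges on the outer boundary of the grid count as borders). Cards: each card has either an integer or nothing (a blank card) on its front; all backs are indistinguishable. A pile-shifting shuffle applied to a matrix of face-down cards (each entry may be a stack, all stacks in a row of equal size) cyclically shifts its columns by a uniformly random amount unknown to everyone. Chosen cut protocol: given face-down cards (or equal-size stacks) $c_1,\dots,c_q$ and a secret index $i$ chosen by $P$, $P$ forms a $3\times q$ matrix with row 1 equal to $c_1,\dots,c_q$, row 2 a face-down card $1$ in column $i$ and $0$ elsewhere, row 3 a card $1$ in column 1 and $0$ elsewhere (turned face-down); a pile-shifting shuffle is applied; row 2 is revealed and the card of row 1 above the $1$ is $c_i$; after $c_i$ has been used it is put back, all face-up cards are turned face-down, another pile-shifting shuffle is applied, row 3 is revealed and the columns are cyclically shifted so that its $1$ returns to column 1. Printing protocol: given a face-down $p\times q$ template and a face-down $p\times q$ area, each template card is placed on the corresponding area card, forming $pq$ stacks of two; for each stack, $P$ uses the chosen cut protocol to select one of its two cards, the selected card is revealed, $V$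 rejects unless it is blank, and it is removed. Five Cells protocol: $P$ publicly puts a blank card on every cell, appends 4 rows and 4 columns of blank ''dummy'' cards below and to the right, and turns all cards face-down, giving an $(m+4)\times(n+4)$ matrix, read row by row as a sequence $a_1,a_2,\dots$. $P$ builds 63 templates, one per pentomino type: a $5\times5$ matrix with the pentomino at the top-left, each of its cells a card with the number of that cell's edges which are borders of the pentomino, all other cards blank; $V$ checks all templates. For $i=1,\dots,k$ with $k=mn/5$: (1) using the chosen cut protocol on the sequence, $P$ selects the top-left card of a $5\times5$ area (cards at positions $j+r(n+4)+c$, $0\le r,c\le4$); (2) using the chosen cut protocol, $P$ selects one template; (3) the printing protocol is applied to this template and area; (4) $P$ reconstructs a template and returns it to the pile, and $V$ checks again that the pile consists of the 63 correct templates (rejecting otherwise). Finally $P$ reveals the cards on the originally numbered cells and $V$ rejects unless they match the given numbers; $P$ reveals all dummy cards and $V$ rejects unless they are blank. Otherwise $V$ accepts. *)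

From mathcomp Require Import all_boot.
Set Implicit Arguments. Unset Strict Implicit. Unset Printing Implicit Defensive.

(* cells of an m x n grid: (row, column) *)
Definition cell (m n : nat) := ('I_m * 'I_n)%type.

Definition coords m n (x : cell m n) : nat * nat := (nat_of_ord x.1, nat_of_ord x.2).

Definition adjacent m n (x y : cell m n) : bool :=
  ((x.1 == y.1 :> nat) && ((x.2.+1 == y.2 :> nat) || (y.2.+1 == x.2 :> nat)))
  || ((x.2 == y.2 :> nat) && ((x.1.+1 == y.1 :> nat) || (y.1.+1 == x.1 :> nat))).

Definition connected_cells m n (B : {set cell m n}) : bool :=
  [forall x in B, forall y in B,
     connect [rel u v | [&& u \in B, v \in B & adjacent u v]] x y].

Definition pentomino m n (B : {set cell m n}) : bool :=
  (#|B| == 5) && connected_cells B.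

Definition inB m n (B : {set cell m n}) (p : nat * nat) : bool :=
  [exists x in B, coords x == p].

(* number of the four edges of the cell at coordinates (i,j) that are borders
   of the region A: an edge is a border iff the cell across it is not in A
   (edges on the outer boundary are borders). *)
Definition bcount (A : nat * nat -> bool) (p : nat * nat) : nat :=
  let: (i, j) := p in
  ((i == 0) || ~~ A (i.-1, j)) + ~~ A (i.+1, j)
  + ((j == 0) || ~~ A (i, j.-1)) + ~~ A (i, j.+1).

(* clues: Some v on a numbered cell, None otherwise *)
Definition puzzle m n := cell m n -> option nat.

Definition solution m n (clue : puzzle m n) (P : {set {set cell m n}}) : Prop :=
  [/\ partition P [set: cell m n],
      {in P, forall B, pentomino B} &
      forall x v, clue x = Some v -> bcount (inB (pblock P x)) (coords x) = v].

(* pentomino types: pentominoes in a 5x5 box touching row 0 and column 0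
   (the 63 fixed pentominoes, one per template) *)
Definition ptype (S : {set cell 5 5}) : bool :=
  [&& pentomino S, [exists x in S, x.1 == 0 :> nat] & [exists x in S, x.2 == 0 :> nat]].

(* card: Some k = card with integer k, None = blank card *)
Definition card := option nat.

Definition tcard (S : {set cell 5 5}) (r c : nat) : card :=
  if inB S (r, c) then Some (bcount (inB S) (r, c)) else None.

(* state of the (m+4) x (n+4) matrix read row by row (positions 0,1,2,...) *)
Definition state := nat -> card.

Definition width (n : nat) := n + 4.
Definition total (m n : nat) := (m + 4) * width n.

Definition pos m n (x : cell m n) : nat := x.1 * width n + x.2.

Definition is_dummy m n (p : nat) : bool := (m <= p %/ width n) || (n <= p %% width n).

(* one round of the prover: top-left position of the 5x5 area, the selected
   template type, and for each stack (r,c) whether P selects (to reveal and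
   remove) the template card (true) or the area card (false) *)
Record choice := Choice { top : nat; typ : {set cell 5 5}; sel : nat -> nat -> bool }.

Definition area_off (n j p : nat) : option (nat * nat) :=
  if j <= p then
    let d := p - j in
    if (d %/ width n < 5) && (d %% width n < 5) then Some (d %/ width n, d %% width n)
    else None
  else None.

(* V does not reject during the round *)
Definition round_ok m n (s : state) (ch : choice) : bool :=
  [&& ptype (typ ch),
      top ch + 4 * width n + 4 < total m n &
      [forall r : 'I_5, forall c : 'I_5,
         (if sel ch r c then tcard (typ ch) r c
          else s (top ch + r * width n + c)) == None]].

(* the area after printing: each stack keeps its unselected card *)
Definition step n (s : state) (ch : choice) : state :=
  fun p => match area_off n (top ch) p with
           | Some (r, c) => if sel ch r c then s p else tcard (typ ch) r c
           | None => s p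
           end.

Fixpoint run m n (s : state) (chs : seq choice) : option state :=
  match chs with
  | [::] => Some s
  | ch :: t => if round_ok m n s ch then run m n (step n s ch) t else None
  end.

Definition init : state := fun _ => None.

Definition accepts m n (clue : puzzle m n) (chs : seq choice) : Prop :=
  size chs = (m * n) %/ 5 /\
  exists s, run m n init chs = Some s /\
    (forall x v, clue x = Some v -> s (pos x) = Some v) /\
    (forall p, p < total m n -> is_dummy m n p -> s p = None).

Definition placed m n (ch : choice) : {set cell m n} :=
  [set x : cell m n | [exists y in typ ch, pos x == top ch + y.1 * width n + y.2]].

(* At a cell of the template's pentomino the template card is not blank, so the
   card that P reveals (and V requires to be blank) is the area card and the
   template card stays on the table.  Hence each round prints, onto cards that
   are still blank, a translate of a genuine pentomino carrying its own border
   counts, and no later round can print over it: the printed pentominoes are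
   pairwise disjoint.  The dummy cards end up blank, so every translate lies
   inside the grid, where it is still a pentomino with the same border counts.
   Being mn/5 pairwise disjoint sets of 5 cells, they partition the grid, and
   the final check of the numbered cells is exactly the clue condition. *)

From Pilot Require Import Defs.
From mathcomp Require Import all_boot.
From mathcomp Require Import zify.
Set Implicit Arguments. Unset Strict Implicit. Unset Printing Implicit Defensive.

Lemma trivIset_pairwise_disjoint (T : finType) (L : seq {set T}) :
    set0 \notin L -> pairwise (fun A B : {set T} => [disjoint A & B]) L ->
  trivIset [set:: L] && uniq L.
Proof.
elim: L => [|A L IHL] /=; first by rewrite set_nil /trivIset /cover !big_set0 cards0.
rewrite in_cons negb_or => /andP[A_neq0 L_neq0].
case/andP=> /allP disjA /(IHL L_neq0)/andP[tiL ->].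
rewrite set_cons andbT.
have [|//|-> A_notin] := @trivIsetU1 _ A [set:: L] _ tiL.
- by move=> B; rewrite inE; apply: disjA.
- by rewrite inE.
by move: A_notin; rewrite inE => ->.
Qed.

Lemma partition_pairwise_disjoint (T : finType) (L : seq {set T}) k :
    pairwise (fun A B : {set T} => [disjoint A & B]) L ->
    {in L, forall B : {set T}, #|B| = k.+1} -> k.+1 * size L = #|T| ->
  partition [set:: L] [set: T].
Proof.
move=> disjL cardL sizeL.
have L_neq0 : set0 \notin L by apply/negP => /cardL; rewrite cards0.
have /andP[tiL uniqL] := trivIset_pairwise_disjoint L_neq0 disjL.
rewrite /partition tiL inE L_neq0 andbT eqEcard subsetT cardsT -sizeL.
move: (leq_card_cover [set:: L]).2; rewrite tiL => /eqP ->.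
rewrite (eq_bigr (fun=> k.+1)) => [|B]; last by rewrite inE => /cardL.
by rewrite sum_nat_const cardsE (card_uniqP uniqL) mulnC leqnn.
Qed.

Lemma bcount_shift (A B : nat * nat -> bool) a b i j :
    (forall i j, A (a + i, b + j) = B (i, j)) ->
    (forall i j, (i < a) || (j < b) -> A (i, j) = false) ->
  bcount A (a + i, b + j) = bcount B (i, j).
Proof.
move=> AB A_out; rewrite /bcount -!addnS !AB.
have -> : (a + i == 0) || ~~ A ((a + i).-1, b + j) = (i == 0) || ~~ B (i.-1, j).
  case: i => [|i]; last by rewrite addnS /= -AB.
  by case: a {AB} A_out => [|a] A_out //=; rewrite addn0 A_out ?ltnSn.
have -> // : (b + j == 0) || ~~ A (a + i, (b + j).-1) = (j == 0) || ~~ B (i, j.-1).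
case: j => [|j]; last by rewrite addnS /= -AB.
by case: b {AB} A_out => [|b] A_out //=; rewrite addn0 A_out ?ltnSn ?orbT.
Qed.

Lemma shift_cell_exists p q m n a b (S : {set cell p q}) :
    S != set0 -> {in S, forall y : cell p q, a + y.1 < m /\ b + y.2 < n} ->
  exists f : cell p q -> cell m n,
    {in S, forall y : cell p q, coords (f y) = (a + y.1, b + y.2)}.
Proof.
case/set0Pn=> y0 /[swap] S_in /S_in[y01 y02].
exists (fun y : cell p q => (insubd (Ordinal y01) (a + y.1), insubd (Ordinal y02) (b + y.2))).
by move=> y /S_in[y1 y2]; rewrite /coords /= !insubdK.
Qed.

Section Translation.
Variables (p q m n a b : nat) (S : {set cell p q}) (f : cell p q -> cell m n).
Hypothesis coords_f : {in S, forall y : cell p q, coords (f y) = (a + y.1, b + y.2)}.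

Lemma translate_inj : {in S &, injective f}.
Proof.
move=> [y1 y2] [z1 z2] yS zS /(congr1 (@coords m n)); rewrite !coords_f //=.
by case=> /addnI/val_inj-> /addnI/val_inj->.
Qed.

Lemma adjacent_translate : {in S &, forall u v, adjacent (f u) (f v) = adjacent u v}.
Proof.
move=> u v uS vS; have := coords_f uS; have := coords_f vS.
rewrite /adjacent /coords => -[-> ->] [-> ->].
by rewrite !eqn_add2l -!addnS !eqn_add2l.
Qed.

Lemma pentomino_translate : pentomino S -> pentomino (f @: S).
Proof.
case/andP=> /eqP cardS /forallP S_conn.
rewrite /pentomino card_in_imset ?cardS; last exact: translate_inj.
apply/forallP => x; apply/implyP => /imsetP[y yS ->].
apply/forallP => x'; apply/implyP => /imsetP[z zS ->].
have := forallP (implyP (S_conn y) yS) z; rewrite zS /=.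
move/connectP=> [r r_path ->]; elim: r y yS r_path => [|u r IHr] y yS /=.
  by rewrite connect0.
case/andP=> /and3P[_ uS yu] /(IHr u uS); apply: connect_trans; apply: connect1.
by rewrite /= !imset_f // adjacent_translate.
Qed.

Lemma inB_translate i j : inB (f @: S) (a + i, b + j) = inB S (i, j).
Proof.
apply/existsP/existsP=> [[x /andP[/imsetP[y yS ->]]] | [y /andP[yS /eqP[yi yj]]]].
  by rewrite coords_f // => /eqP[/addnI <- /addnI <-]; exists y; rewrite yS eqxx.
by exists (f y); rewrite imset_f // coords_f //= yi yj.
Qed.

Lemma inB_translate_out i j : (i < a) || (j < b) -> inB (f @: S) (i, j) = false.
Proof.
move=> ij_out; apply/existsP=> -[_ /andP[/imsetP[y yS ->]]].
by rewrite coords_f // => /eqP[yi yj]; move: ij_out; rewrite -yi -yj; lia.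
Qed.

Lemma bcount_translate i j : bcount (inB (f @: S)) (a + i, b + j) = bcount (inB S) (i, j).
Proof. exact: bcount_shift inB_translate inB_translate_out. Qed.

End Translation.

Lemma divmod_width n r c : c < width n ->
  ((r * width n + c) %/ width n, (r * width n + c) %% width n) = (r, c).
Proof.
move=> c_lt; have w_gt0 : 0 < width n by rewrite /width addn4.
by rewrite divnMDl // divn_small // addn0 modnMDl modn_small.
Qed.

Lemma pos_inj m n : injective (@pos m n).
Proof.
move=> [i j] [i' j']; rewrite /pos /=.
have lt_w (k : 'I_n) : k < width n by rewrite /width; have := ltn_ord k; lia.
move=> /(congr1 (fun p => (p %/ width n, p %% width n))) /=.
by rewrite !divmod_width ?lt_w // => -[/val_inj-> /val_inj->].
Qed.

Definition area_pos n (ch : choice) (y : cell 5 5) : nat := top ch + y.1 * width n + y.2.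

Lemma tcard_mem (S : {set cell 5 5}) y :
  y \in S -> tcard S y.1 y.2 = Some (bcount (inB S) (coords y)).
Proof.
move=> yS; rewrite /tcard.
by have -> // : inB S (coords y) by apply/existsP; exists y; rewrite yS /=.
Qed.

Lemma mem_placed m n ch (x : cell m n) :
  reflect (exists2 y, y \in typ ch & pos x = area_pos n ch y) (x \in placed m n ch).
Proof.
rewrite inE; apply: (iffP existsP) => [[y /andP[yS /eqP]] | [y yS /eqP]].
  by exists y.
by exists y; rewrite yS.
Qed.

Section Protocol.
Variables (m n : nat).

Lemma step_keep s ch p : round_ok m n s ch -> s p != None -> step n s ch p = s p.
Proof.
case/and3P=> _ _ /forallP blank_sel sp; rewrite /step /area_off.
case: ifP => // top_p; case: ifP => // /andP[r5 c5]; case: ifP => // sel_rc.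
have := forallP (blank_sel (Ordinal r5)) (Ordinal c5); rewrite /= sel_rc.
by rewrite -addnA -divn_eq subnKC // => /eqP sp0; rewrite sp0 in sp.
Qed.

Lemma run_keep s chs s' p : run m n s chs = Some s' -> s p != None -> s' p = s p.
Proof.
elim: chs s => [|ch chs IH] s /=; first by case=> ->.
by case: ifP => // ok /IH run_s sp; rewrite run_s (step_keep ok).
Qed.

Definition round_printed s ch : Prop :=
  [/\ ptype (typ ch), top ch + 4 * width n + 4 < Defs.total m n &
      {in typ ch, forall y, s (area_pos n ch y) = tcard (typ ch) y.1 y.2}].

(* With [n = 0] the rows are only 4 cards wide and a 5x5 area wraps around. *)
Hypothesis n_gt0 : 0 < n.

Lemma area_off_pos ch (y : cell 5 5) :
  area_off n (top ch) (area_pos n ch y) = Some (nat_of_ord y.1, nat_of_ord y.2).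
Proof.
have y2_lt : y.2 < width n by rewrite /width; have := ltn_ord y.2; lia.
rewrite /area_off /area_pos -addnA leq_addr addKn.
by case: (divmod_width y.1 y2_lt) => -> ->; rewrite !ltn_ord.
Qed.

Lemma step_print s ch y : round_ok m n s ch -> y \in typ ch ->
  s (area_pos n ch y) = None /\ step n s ch (area_pos n ch y) = tcard (typ ch) y.1 y.2.
Proof.
case/and3P=> _ _ /forallP blank_sel yS; have := forallP (blank_sel y.1) y.2.
rewrite /step area_off_pos (tcard_mem yS).
by case: (sel ch y.1 y.2) => /eqP.
Qed.

Lemma run_printed s chs s' : run m n s chs = Some s' ->
  {in [seq placed m n ch | ch <- chs], forall B : {set cell m n},
     exists2 ch, round_printed s' ch & B = placed m n ch}.
Proof.
elim: chs s => [|ch chs IH] s //=; case: ifP => // ok run_s B.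
rewrite in_cons => /predU1P[-> | /(IH _ run_s)//]; exists ch => //.
have /and3P[ptype_ch bound_ch _] := ok; split=> // y yS.
have [_ step_y] := step_print ok yS.
by rewrite (run_keep run_s) step_y // (tcard_mem yS).
Qed.

Lemma run_placed_blank s chs s' : run m n s chs = Some s' ->
  {in [seq placed m n ch | ch <- chs], forall B : {set cell m n},
     {in B, forall x, s (pos x) = None}}.
Proof.
elim: chs s => [|ch chs IH] s //=; case: ifP => // ok run_s B.
rewrite in_cons => /predU1P[-> x /mem_placed[y yS ->] | B_in x xB].
  by case: (step_print ok yS).
case sx: (s (pos x)) => [v|] //.
by have := IH _ run_s B B_in x xB; rewrite (step_keep ok) sx.
Qed.

Lemma run_placed_disjoint s chs s' : run m n s chs = Some s' ->
  pairwise (fun A B : {set cell m n} => [disjoint A & B]) [seq placed m n ch | ch <- chs].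
Proof.
elim: chs s => [|ch chs IH] s //=; case: ifP => // ok run_s.
rewrite (IH _ run_s) andbT; apply/allP => B B_in.
rewrite disjoint_subset; apply/subsetP => x /mem_placed[y yS pos_x]; rewrite inE.
apply/negP => /(run_placed_blank run_s B_in); rewrite pos_x.
by case: (step_print ok yS) => _ ->; rewrite (tcard_mem yS).
Qed.

End Protocol.

Section PrintedRound.
Variables (m n : nat) (s : state) (ch : choice).
Hypothesis printed : round_printed m n s ch.
Hypothesis dummy_blank : forall p, p < Defs.total m n -> is_dummy m n p -> s p = None.

Let row0 := top ch %/ width n.
Let col0 := top ch %% width n.

Lemma area_posE y : area_pos n ch y = (row0 + y.1) * width n + (col0 + y.2).
Proof. by rewrite /area_pos {1}(divn_eq (top ch) (width n)); lia. Qed.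

Lemma area_pos_not_dummy : {in typ ch, forall y, ~~ is_dummy m n (area_pos n ch y)}.
Proof.
case: printed => _ bound print y yS.
have lt_total : area_pos n ch y < Defs.total m n.
  apply: leq_ltn_trans bound; apply: leq_add; last by rewrite -ltnS ltn_ord.
  by rewrite leq_add2l leq_mul2r -ltnS ltn_ord orbT.
by apply/negP => /(dummy_blank lt_total); rewrite print // tcard_mem.
Qed.

Lemma area_pos_bounds : {in typ ch, forall y : cell 5 5, row0 + y.1 < m /\ col0 + y.2 < n}.
Proof.
(* The template has a cell in column 0, so the area starts inside the grid's columns. *)
have col0_lt : col0 < n.
  case: printed => /and3P[_ _ /existsP[y0 /andP[y0S /eqP y02]]] _ _.
  have col_lt_w : col0 + y0.2 < width n by rewrite y02 addn0 ltn_pmod // /width addn4.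
  have := area_pos_not_dummy y0S; rewrite area_posE /is_dummy.
  by case: (divmod_width (row0 + y0.1) col_lt_w) => _ ->; rewrite y02 addn0 ltnNge => /norP[].
move=> y yS; have col_lt_w : col0 + y.2 < width n by rewrite /width; have := ltn_ord y.2; lia.
have := area_pos_not_dummy yS; rewrite area_posE /is_dummy.
by case: (divmod_width (row0 + y.1) col_lt_w) => -> ->; rewrite !ltnNge => /norP.
Qed.

Lemma placed_printed :
  pentomino (placed m n ch) /\
  {in placed m n ch, forall x, s (pos x) = Some (bcount (inB (placed m n ch)) (coords x))}.
Proof.
case: printed => ptype_ch _ print.
have typ_neq0 : typ ch != set0.
  by case/and3P: ptype_ch => /andP[/eqP card5 _] _ _; rewrite -card_gt0 card5.
have [f coords_f] := shift_cell_exists typ_neq0 area_pos_bounds.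
have pos_f : {in typ ch, forall y, pos (f y) = area_pos n ch y}.
  by move=> y yS; have := coords_f y yS; rewrite area_posE /pos /coords => -[-> ->].
have -> : placed m n ch = f @: typ ch.
  apply/setP => x; apply/mem_placed/imsetP => [[y yS pos_x] | [y yS ->]].
    by exists y => //; apply: pos_inj; rewrite pos_f.
  by exists y; rewrite ?pos_f.
split; first by case/and3P: ptype_ch => pent_typ _ _; exact: pentomino_translate coords_f pent_typ.
move=> _ /imsetP[y yS ->]; rewrite pos_f // print // tcard_mem // coords_f //.
by rewrite bcount_translate.
Qed.

End PrintedRound.

Lemma solution_empty_grid m (clue : puzzle m 0) : solution clue set0.
Proof.
split=> [|B|[i []] //]; last by rewrite inE.
have -> : [set: cell m 0] = set0 by apply/setP => -[i []].
by rewrite partition_set0.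
Qed.

Theorem lemma2 (m n : nat) (clue : puzzle m n) (chs : seq choice) :
  5 %| m * n ->
  accepts clue chs ->
  solution clue [set:: [seq placed m n ch | ch <- chs]].
Proof.
move=> dvd_mn [size_chs [s [run_chs [clue_printed dummy_blank]]]].
have [n0 | n_gt0] := posnP n.
  have -> : chs = [::] by apply/size0nil; rewrite size_chs n0 muln0.
  by subst n; rewrite set_nil; apply: solution_empty_grid.
set P := [set:: _].
have pieces B : B \in P ->
    pentomino B /\ {in B, forall x, s (pos x) = Some (bcount (inB B) (coords x))}.
  by rewrite inE => /(run_printed n_gt0 run_chs)[ch printed ->]; apply: placed_printed.
have partP : partition P [set: cell m n].
  apply: (partition_pairwise_disjoint (k := 4)) (run_placed_disjoint n_gt0 run_chs) _ _.
    by move=> B B_in; have /pieces[/andP[/eqP]] // : B \in P by rewrite inE.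
  by rewrite size_map size_chs card_prod !card_ord mulnC divnK.
split=> // [B /pieces[] // | x v clue_x].
have x_cover : x \in cover P by rewrite (cover_partition partP) inE.
have [_ print_x] := pieces _ (pblock_mem x_cover).
by move: (print_x x); rewrite mem_pblock x_cover (clue_printed _ _ clue_x) => /(_ isT) [].
Qed.
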